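(* Let $R\subset B$ be domains, $a_1,\ldots,a_s,b\in B\setminus\{0\}$ with $b$ not a unit of $B$, $R[y_1,\ldots,y_s]$ a polynomial ring, $\sigma:R[y_1,\ldots,y_s]\to B$ the $R$-algebra homomorphism with $\sigma(y_i)=a_i$, $\pi:B\to B/bB$ the natural surjection, $\bar\sigma:=\pi\circ\sigma$, and $A:=R[a_1,\ldots,a_s]$. If there exists $\mathcal S\subset R[y_1,\ldots,y_s]$ such that $\ker\bar\sigma$ is the ideal generated by $\mathcal S$ and $\sigma(\mathcal S)\subset bA[b]$, then $A[b^{\pm1}]\cap B=A[b]$ (intersection in $Q(B)$). If moreover $b\in A$, then $A[b^{-1}]\cap B=A$.
   Context: $Q(B)$ denotes the field of fractions of $B$. *)

From HB Require Import structures.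
From mathcomp Require Import all_boot all_order all_algebra.
From mathcomp Require Import fraction.
From mathcomp Require Import mpoly.
Set Implicit Arguments. Unset Strict Implicit. Unset Printing Implicit Defensive.
Import Order.TTheory GRing.Theory Num.Theory.
Local Open Scope ring_scope.

Notation "x %:F" := (@FracField.tofrac _ x) : ring_scope.

Section Defs.
Context (R B : idomainType) (iota : {rmorphism R -> B}) (s : nat) (a : 'I_s -> B).

Definition sigma (f : {mpoly R[s]}) : B := mmap iota a f.

Definition inA (x : B) : Prop := exists f : {mpoly R[s]}, x = sigma f.

Definition inAb (b x : B) : Prop :=
  exists (n : nat) (c : 'I_n -> B), (forall k, inA (c k)) /\
    x = \sum_(k < n) c k * b ^+ k.

Definition in_ideal_gen (S : {mpoly R[s]} -> Prop) (f : {mpoly R[s]}) : Prop :=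
  exists (n : nat) (g h : 'I_n -> {mpoly R[s]}), (forall i, S (h i)) /\
    f = \sum_(i < n) g i * h i.

Definition in_ker_sigmabar (b : B) (f : {mpoly R[s]}) : Prop :=
  exists c : B, sigma f = b * c.

Definition inB (z : {fraction B}) : Prop := exists c : B, z = c%:F.

Definition inAbpm (b : B) (z : {fraction B}) : Prop :=
  exists (x : B) (n : nat), inAb b x /\ z = x%:F / (b%:F) ^+ n.

Definition inAbinv (b : B) (z : {fraction B}) : Prop :=
  exists (x : B) (n : nat), inA x /\ z = x%:F / (b%:F) ^+ n.

End Defs.

From HB Require Import structures.
From mathcomp Require Import all_boot all_order all_algebra.
From mathcomp Require Import fraction.
From mathcomp Require Import mpoly.
Import Order.TTheory GRing.Theory Num.Theory.
Local Open Scope ring_scope.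

(* Clearing denominators, an element z = x / b^n of B with x in A[b] is some
   c in B with c b^n = x, so everything reduces to showing that A[b] is
   b-saturated in B: if b w lies in A[b], so does w.  Write b w = c0 + b T with
   c0 = sigma f in A and T in A[b].  Then f lies in the kernel of bar sigma,
   which is generated by S; as sigma(S) lies in the A-submodule b A[b] of
   A[b], so does c0 = b y, and cancelling b gives w = y + T in A[b]. *)

Section SubalgebraA.
Local Set Implicit Arguments.
Context (R B : idomainType) (iota : {rmorphism R -> B}) (s : nat) (a : 'I_s -> B).
Local Notation sigma := (sigma iota a).
Local Notation inA := (inA iota a).

HB.instance Definition _ := GRing.RMorphism.copy sigma (mmap iota a).

Lemma inA0 : inA 0. Proof. by exists 0; rewrite rmorph0. Qed.

Lemma inAD x y : inA x -> inA y -> inA (x + y).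
Proof. by move=> [f ->] [g ->]; exists (f + g); rewrite rmorphD. Qed.

Lemma inAM x y : inA x -> inA y -> inA (x * y).
Proof. by move=> [f ->] [g ->]; exists (f * g); rewrite rmorphM. Qed.

Lemma inAX x n : inA x -> inA (x ^+ n).
Proof. by move=> [f ->]; exists (f ^+ n); rewrite rmorphXn. Qed.

Variable b : B.
Local Notation inAb := (inAb iota a b).

Lemma inAbP x :
  inAb x <-> exists2 p : {poly B}, (forall k, inA p`_k) & x = p.[b].
Proof.
split=> [[n [c [Ac ->]]] | [p Ap ->]]; last first.
  by exists (size p), (fun i => p`_i); rewrite horner_coef.
pose p := \poly_(k < n) oapp c 0 (insub k : option 'I_n).
exists p => [k | ]; last by rewrite horner_poly; apply: eq_bigr => i _; rewrite valK.
rewrite coef_poly; case: (k < n)%N; last exact: inA0.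
by case: insub => [i|] /=; [apply: Ac | apply: inA0].
Qed.

Lemma inA_inAb c : inA c -> inAb c.
Proof.
move=> Ac; apply/inAbP; exists c%:P => [k|]; last by rewrite hornerC.
by rewrite coefC; case: (k == 0)%N => //; apply: inA0.
Qed.

Lemma inAb0 : inAb 0. Proof. exact/inA_inAb/inA0. Qed.

Lemma inAbD x y : inAb x -> inAb y -> inAb (x + y).
Proof.
move=> /inAbP[p Ap ->] /inAbP[q Aq ->]; apply/inAbP; exists (p + q).
  by move=> k; rewrite coefD; apply: inAD.
by rewrite hornerD.
Qed.

Lemma inAbMl c x : inA c -> inAb x -> inAb (c * x).
Proof.
move=> Ac /inAbP[p Ap ->]; apply/inAbP; exists (c%:P * p).
  by move=> k; rewrite coefCM; apply: inAM.
by rewrite hornerCM.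
Qed.

Lemma inAb_constant_term x :
  inAb x -> exists c T, [/\ inA c, inAb T & x = c + b * T].
Proof.
move=> /inAbP[p Ap ->]; exists p`_0, (drop_poly 1 p).[b]; split => //.
  by apply/inAbP; exists (drop_poly 1 p) => // k; rewrite coef_drop_poly.
have p0E : take_poly 1 p = (p`_0)%:P.
  by apply/polyP=> k; rewrite coef_take_poly coefC ltnS leqn0; case: eqP => [->|].
by rewrite -{1}(poly_take_drop 1 p) p0E hornerD hornerC hornerM hornerX (mulrC b).
Qed.

Lemma inAb_inA x : inA b -> inAb x -> inA x.
Proof.
move=> Ab /inAbP[p Ap ->]; rewrite horner_coef.
apply: (big_ind inA); [exact: inA0 | exact: inAD |].
by move=> i _; apply: inAM => //; apply: inAX.
Qed.

Definition in_bAb z := exists2 y, inAb y & z = b * y.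

Lemma in_bAb0 : in_bAb 0. Proof. by exists 0; [apply: inAb0 | rewrite mulr0]. Qed.

Lemma in_bAbD z1 z2 : in_bAb z1 -> in_bAb z2 -> in_bAb (z1 + z2).
Proof.
by move=> [y1 ? ->] [y2 ? ->]; exists (y1 + y2); [apply: inAbD | rewrite mulrDr].
Qed.

Lemma in_bAbMl c z : inA c -> in_bAb z -> in_bAb (c * z).
Proof. by move=> Ac [y ? ->]; exists (c * y); [apply: inAbMl | rewrite mulrCA]. Qed.

Section Saturation.
Variable S : {mpoly R[s]} -> Prop.
Hypothesis sigmaS : forall f, S f -> exists x, inAb x /\ sigma f = b * x.

Lemma sigma_ideal_gen_bAb f : in_ideal_gen S f -> in_bAb (sigma f).
Proof.
move=> [n [g [h [Sh ->]]]]; rewrite rmorph_sum.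
apply: (big_ind in_bAb); [exact: in_bAb0 | exact: in_bAbD |].
move=> i _; rewrite rmorphM; apply: in_bAbMl; first by exists (g i).
by have [x [Abx xE]] := sigmaS (Sh i); exists x.
Qed.

Hypothesis ker_sub_ideal : forall f, in_ker_sigmabar iota a b f -> in_ideal_gen S f.
Hypothesis b_neq0 : b != 0.

Lemma inAb_cancel_b w : inAb (b * w) -> inAb w.
Proof.
move=> /inAb_constant_term[c [T [[f cE] AbT bwE]]].
have f_ker : in_ker_sigmabar iota a b f.
  by exists (w - T); rewrite -cE mulrBr bwE addrK.
have /sigma_ideal_gen_bAb[y Aby cE'] := ker_sub_ideal f_ker.
have -> : w = y + T by apply: (mulfI b_neq0); rewrite mulrDr -cE' -cE.
exact: inAbD.
Qed.

Lemma inAb_cancel_bX n w : inAb (w * b ^+ n) -> inAb w.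
Proof.
elim: n w => [|n IHn] w; first by rewrite mulr1.
by rewrite exprS mulrCA => /inAb_cancel_b; apply: IHn.
Qed.

End Saturation.
End SubalgebraA.

Lemma tofrac_eq_div (B : idomainType) (x c d : B) :
  d != 0 -> c%:F = x%:F / d%:F -> x = c * d.
Proof.
move=> d_neq0 cE; apply/eqP; rewrite -tofrac_eq tofracM cE mulrVK //.
by rewrite unitfE tofrac_eq0.
Qed.

Theorem lemma5p5 (R B : idomainType) (iota : {rmorphism R -> B})
  (iota_inj : injective iota) (s : nat) (a : 'I_s -> B) (b : B)
  (a_nz : forall i, a i != 0) (b_nz : b != 0) (b_nunit : b \isn't a GRing.unit)
  (S : {mpoly R[s]} -> Prop)
  (hker : forall f, in_ker_sigmabar iota a b f <-> in_ideal_gen S f)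
  (hS : forall f, S f -> exists x, inAb iota a b x /\ sigma iota a f = b * x) :
  (forall z : {fraction B}, (inAbpm iota a b z /\ inB z) <->
      exists x, inAb iota a b x /\ z = x%:F) /\
  (inA iota a b ->
    forall z : {fraction B}, (inAbinv iota a b z /\ inB z) <->
      exists x, inA iota a x /\ z = x%:F).
Proof.
have cancel_bX := inAb_cancel_bX hS (fun f => (hker f).1) b_nz.
have denom_clear (x c : B) n : c%:F = x%:F / b%:F ^+ n -> x = c * b ^+ n.
  by rewrite -tofracXn; apply: tofrac_eq_div; rewrite expf_neq0.
split=> [z | Ab z]; split.
- move=> [[x [n [Abx zE]]] [c cE]]; exists c; split => //.
  by apply: (cancel_bX n); rewrite -(denom_clear x c n) -?cE.
- by move=> [x [Abx ->]]; split; [exists x, 0%N; rewrite expr0 divr1 | exists x].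
- move=> [[x [n [Ax zE]]] [c cE]]; exists c; split => //.
  apply: (inAb_inA Ab); apply: (cancel_bX n).
  by rewrite -(denom_clear x c n) -?cE //; apply: inA_inAb.
- by move=> [x [Ax ->]]; split; [exists x, 0%N; rewrite expr0 divr1 | exists x].
Qed.
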